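(* Every pair of elements of $\mathrm{SO}(3)$ is strongly doubly reversible.
   Context: A pair $(g_1,g_2)$ in a group $G$ is strongly doubly reversible if there is $g\in G$ with $g^2=1$ such that $g g_1 g^{-1}=g_1^{-1}$ and $g g_2 g^{-1}=g_2^{-1}$. *)

From mathcomp Require Import all_boot all_order all_algebra.
From mathcomp Require Import reals.
Set Implicit Arguments. Unset Strict Implicit. Unset Printing Implicit Defensive.
Import Order.TTheory GRing.Theory Num.Theory.
Local Open Scope ring_scope.

Definition SO3 (R : realType) (A : 'M[R]_3) : Prop :=
  A *m A^T = 1%:M /\ \det A = 1.

Definition strongly_doubly_reversible_SO3 (R : realType) (g1 g2 : 'M[R]_3) : Prop :=
  exists g : 'M[R]_3, SO3 g /\ g *m g = 1%:M /\
    g *m g1 *m invmx g = invmx g1 /\ g *m g2 *m invmx g = invmx g2.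

From mathcomp Require Import all_boot all_order all_algebra.
From mathcomp Require Import reals.
From mathcomp Require Import ring lra.
Set Implicit Arguments. Unset Strict Implicit. Unset Printing Implicit Defensive.
Import Order.TTheory GRing.Theory Num.Theory.
Local Open Scope ring_scope.

(* Every rotation A fixes a nonzero axis v, since det (A - 1) = 0.  Given the
   axes v1, v2 of g1, g2, let g be the reflection in a line n orthogonal to
   both, i.e. the half-turn about n.  Then B = g g_i is a rotation reversing
   v_i, so det (B + 1) = 0 and tr B = -1.  For a rotation adj B = B^T, so
   tr B^2 = (tr B)^2 - 2 tr B = 3 and tr ((B - B^T)(B - B^T)^T) = 6 - 2 tr B^2
   = 0: B is symmetric.  Thus g g_i = g_i^T g, that is g g_i g^-1 = g_i^-1. *)

Definition i0 : 'I_3 := @Ordinal 3 0 isT.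
Definition i1 : 'I_3 := @Ordinal 3 1 isT.
Definition i2 : 'I_3 := @Ordinal 3 2 isT.

Lemma big_ord3 (V : nmodType) (f : 'I_3 -> V) : \sum_(k < 3) f k = f i0 + f i1 + f i2.
Proof. by rewrite !big_ord_recl big_ord0 addr0 addrA; congr (f _ + f _ + f _); apply: val_inj. Qed.

Section Cubic.
Variable F : comPzRingType.
Implicit Types A : 'M[F]_3.

Lemma mulmx3E m p (A : 'M[F]_(m, 3)) (B : 'M[F]_(3, p)) i j :
  (A *m B) i j = A i i0 * B i0 j + A i i1 * B i1 j + A i i2 * B i2 j.
Proof. by rewrite mxE big_ord3. Qed.

Lemma mxtrace3 A : \tr A = A i0 i0 + A i1 i1 + A i2 i2.
Proof. exact: big_ord3. Qed.

(* Reading entries through nat indices lets [/=] evaluate the [lift]s produced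
   by cofactor expansion. *)
Definition mx3_entry A (i j : nat) := A (inord i) (inord j).

Lemma mx3_entryE A (i j : 'I_3) : A i j = mx3_entry A i j.
Proof. by rewrite /mx3_entry !inord_val. Qed.

Lemma det_mx33 A : \det A =
  A i0 i0 * A i1 i1 * A i2 i2 + A i0 i1 * A i1 i2 * A i2 i0 + A i0 i2 * A i1 i0 * A i2 i1
  - A i0 i2 * A i1 i1 * A i2 i0 - A i0 i0 * A i1 i2 * A i2 i1 - A i0 i1 * A i1 i0 * A i2 i2.
Proof.
rewrite (expand_det_row _ i0) big_ord3 /cofactor !(expand_det_row _ ord0).
rewrite !big_ord_recl !big_ord0 /cofactor !det_mx11 !mxE !mx3_entryE /bump /=.
ring.
Qed.

Lemma mxtrace_adj3 A : \tr (\adj A) =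
  (A i1 i1 * A i2 i2 - A i1 i2 * A i2 i1) + (A i0 i0 * A i2 i2 - A i0 i2 * A i2 i0)
  + (A i0 i0 * A i1 i1 - A i0 i1 * A i1 i0).
Proof.
rewrite mxtrace3 !mxE /cofactor !(expand_det_row _ ord0).
rewrite !big_ord_recl !big_ord0 /cofactor !det_mx11 !mxE !mx3_entryE /bump /=.
ring.
Qed.

Lemma det_add_scalar3 A c :
  \det (A + c%:M) = c ^+ 3 + \tr A * c ^+ 2 + \tr (\adj A) * c + \det A.
Proof. by rewrite mxtrace_adj3 mxtrace3 !det_mx33 !mxE /=; ring. Qed.

Lemma mxtrace_sqr3 A : \tr (A *m A) = \tr A ^+ 2 - 2 * \tr (\adj A).
Proof. by rewrite mxtrace_adj3 !mxtrace3 !mulmx3E; ring. Qed.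
End Cubic.

Lemma adj_orthogonal (R : comPzRingType) n (A : 'M[R]_n) :
  A *m A^T = 1%:M -> \adj A = \det A *: A^T.
Proof. by move=> AAt; rewrite -[\adj A]mulmx1 -AAt mulmxA mul_adj_mx mul_scalar_mx. Qed.

Lemma invmx_orthogonal (R : comUnitRingType) n (A : 'M[R]_n) :
  A *m A^T = 1%:M -> invmx A = A^T.
Proof.
move=> AAt; have [A_unit _] := mulmx1_unit AAt.
by rewrite -[invmx A]mulmx1 -AAt mulmxA mulVmx ?mul1mx.
Qed.

Lemma rV3_orthogonal_exists (F : fieldType) (v1 v2 : 'rV[F]_3) :
  exists2 n : 'rV[F]_3, n != 0 & v1 *m n^T = 0 /\ v2 *m n^T = 0.
Proof.
pose u i : 'rV[F]_3 := if i == i0 then v1 else if i == i1 then v2 else 0.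
pose M := \matrix_i u i.
have /det0P[n n0 nM] : \det M^T == 0.
  by rewrite det_tr (expand_det_row _ i2) big1 // => j _; rewrite !mxE mul0r.
have Mn : M *m n^T = 0 by rewrite -[M]trmxK -trmx_mul nM trmx0.
exists n => //; split.
- by rewrite -[v1]/(u i0) -(rowK u) -row_mul Mn row0.
- by rewrite -[v2]/(u i1) -(rowK u) -row_mul Mn row0.
Qed.

Section RealMatrix.
Variable F : realFieldType.

Lemma mxtrace_mulmx_tr_eq0 m n (M : 'M[F]_(m, n)) : (\tr (M *m M^T) == 0) = (M == 0).
Proof.
apply/idP/idP => [|/eqP->]; last by rewrite mul0mx mxtrace0.
have trE : \tr (M *m M^T) = \sum_i \sum_j M i j ^+ 2.
  by apply: eq_bigr => i _; rewrite mxE; apply: eq_bigr => j _; rewrite mxE expr2.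
have sqr_sum_ge0 i : 0 <= \sum_j M i j ^+ 2 by apply: sumr_ge0 => j _; exact: sqr_ge0.
rewrite trE => /eqP/psumr_eq0P rows0; apply/eqP/matrixP => i j; rewrite mxE.
have /psumr_eq0P entries0 := rows0 (fun i _ => sqr_sum_ge0 i) i isT.
by apply/eqP; rewrite -sqrf_eq0 entries0 // => k _; exact: sqr_ge0.
Qed.

Section Rotation.
Variable A : 'M[F]_3.
Hypotheses (A_orth : A *m A^T = 1%:M) (A_det : \det A = 1).

Lemma det_rot_add_scalar c :
  \det (A + c%:M) = (c + 1) * (c ^+ 2 + (\tr A - 1) * c + 1).
Proof.
by rewrite det_add_scalar3 adj_orthogonal // A_det scale1r mxtrace_tr; ring.
Qed.

Lemma rot_axis_exists : exists2 v : 'rV[F]_3, v != 0 & v *m A = v.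
Proof.
have /det0P[v v0 vA1] : \det (A + (-1)%:M) == 0 by rewrite det_rot_add_scalar addNr mul0r.
by exists v => //; apply/eqP; rewrite -subr_eq0 -[X in _ - X]mulmx1 -mulmxBr -vA1 raddfN.
Qed.

Lemma rot_sym_of_reversed (v : 'rV[F]_3) : v != 0 -> v *m A = - v -> A^T = A.
Proof.
move=> v0 vA.
have trA : \tr A = -1.
  have : \det (A + 1%:M) = 0.
    by apply/eqP/det0P; exists v => //; rewrite mulmxDr mulmx1 vA addNr.
  rewrite det_rot_add_scalar expr1n mulr1; lra.
have trA2 : \tr (A *m A) = 3.
  by rewrite mxtrace_sqr3 adj_orthogonal // A_det scale1r mxtrace_tr trA; ring.
apply/eqP; rewrite eq_sym -subr_eq0 -mxtrace_mulmx_tr_eq0; apply/eqP.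
rewrite linearB /= trmxK mulmxBl !mulmxBr A_orth (mulmx1C A_orth) -trmx_mul.
rewrite !raddfB /= mxtrace_tr trA2 mxtrace1; ring.
Qed.
End Rotation.

Lemma conj_rot_axis_reversal (A g : 'M[F]_3) (v : 'rV[F]_3) :
  A *m A^T = 1%:M -> \det A = 1 -> g *m g^T = 1%:M -> \det g = 1 -> g *m g = 1%:M ->
  v != 0 -> v *m A = v -> v *m g = - v -> g *m A *m invmx g = invmx A.
Proof.
move=> A_orth A_det g_orth g_det gg v0 vA vg.
have g_sym : g^T = g by rewrite -[g^T]mul1mx -gg -mulmxA g_orth mulmx1.
have gA_sym : (g *m A)^T = g *m A.
  apply: (rot_sym_of_reversed _ _ v0).
  - by rewrite trmx_mul mulmxA -(mulmxA g) A_orth mulmx1 g_orth.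
  - by rewrite det_mulmx g_det A_det mulr1.
  - by rewrite mulmxA vg mulNmx vA.
by rewrite !invmx_orthogonal // g_sym -gA_sym trmx_mul -mulmxA g_sym gg mulmx1.
Qed.

Section LineReflection.
Variables (k : nat) (n : 'rV[F]_k).

Definition line_reflection : 'M[F]_k := (2 / \tr (n *m n^T)) *: (n^T *m n) - 1%:M.

Lemma line_reflection_tr : line_reflection^T = line_reflection.
Proof. by rewrite /line_reflection linearB /= linearZ /= trmx_mul trmxK trmx1. Qed.

Lemma line_reflection_orth (v : 'rV[F]_k) : v *m n^T = 0 -> v *m line_reflection = - v.
Proof. by move=> vn; rewrite mulmxBr mulmx1 -scalemxAr mulmxA vn mul0mx scaler0 sub0r. Qed.

Lemma line_reflectionK : n != 0 -> line_reflection *m line_reflection = 1%:M.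
Proof.
rewrite -mxtrace_mulmx_tr_eq0 /line_reflection => s0.
set s := \tr (n *m n^T) in s0 *; set c := 2 / s.
have nnT : n *m n^T = s%:M by rewrite [LHS]mx11_scalar /s /mxtrace big_ord1.
have NN : n^T *m n *m (n^T *m n) = s *: (n^T *m n).
  by rewrite mulmxA -(mulmxA n^T) nnT mul_mx_scalar scalemxAl.
rewrite mulmxBl !mulmxBr !mulmx1 !mul1mx -scalemxAl -scalemxAr NN !scalerA.
have -> : c * c * s = c + c by rewrite /c; field.
by rewrite scalerDl opprB addrA addrK addrC addKr.
Qed.
End LineReflection.

Lemma det_line_reflection3 (n : 'rV[F]_3) : n != 0 -> \det (line_reflection n) = 1.
Proof.
rewrite -mxtrace_mulmx_tr_eq0 => s0.
have sE : \tr (n *m n^T) = n 0 i0 ^+ 2 + n 0 i1 ^+ 2 + n 0 i2 ^+ 2.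
  by rewrite /mxtrace big_ord1 mulmx3E !mxE !expr2.
rewrite sE in s0; rewrite det_mx33 /line_reflection sE !(mxE, big_ord1) /=.
by field.
Qed.
End RealMatrix.

Theorem corollary3p4 (R : realType) (g1 g2 : 'M[R]_3) :
  SO3 g1 -> SO3 g2 -> strongly_doubly_reversible_SO3 g1 g2.
Proof.
move=> [g1_orth g1_det] [g2_orth g2_det].
have [v1 v1_neq0 g1v1] := rot_axis_exists g1_orth g1_det.
have [v2 v2_neq0 g2v2] := rot_axis_exists g2_orth g2_det.
have [n n_neq0 [v1n v2n]] := rV3_orthogonal_exists v1 v2.
pose g := line_reflection n.
have gg : g *m g = 1%:M := line_reflectionK n_neq0.
have g_orth : g *m g^T = 1%:M by rewrite line_reflection_tr.
have g_det : \det g = 1 := det_line_reflection3 n_neq0.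
exists g; do !split => //.
- exact: conj_rot_axis_reversal g1_orth g1_det g_orth g_det gg v1_neq0 g1v1
    (line_reflection_orth v1n).
- exact: conj_rot_axis_reversal g2_orth g2_det g_orth g_det gg v2_neq0 g2v2
    (line_reflection_orth v2n).
Qed.
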